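(* Let $K\ge 1$, $N\ge1$, and for $k\in\{0,1,\dots,K\}$ let $\bm{H}_k\colon\mathbb{R}^{d_k}\to\mathbb{R}^{N\times E_k}$ be differentiable maps, and let $\Phi\colon\mathbb{R}^{N\times E}\to\mathbb{R}$, $E=\sum_{k=0}^K E_k$, be differentiable. Put $\bm{x}=(\bm{x}_0,\dots,\bm{x}_K)$ and $f(\bm{x})=\Phi(\bm{H}_0(\bm{x}_0),\bm{H}_1(\bm{x}_1),\dots,\bm{H}_K(\bm{x}_K))$. Assume $\Phi$ is $L$-smooth, i.e. $\lVert\nabla\Phi(\bm{U})-\nabla\Phi(\bm{V})\rVert\le L\lVert\bm{U}-\bm{V}\rVert$ for all $\bm{U},\bm{V}$, and that each $\bm{H}_k$ has bounded derivative, i.e. $\lVert\nabla\bm{H}_k(\bm{x}_k)\rVert\le H$ for all $\bm{x}_k$ and all $k\in\{0,\dots,K\}$. Let $\{\bm{x}^t\}$ and $\{\bm{G}^t_k\}$ be the iterates and surrogates generated by the EF-VFL algorithm described in the context, and let $\bm{g}^t=(\bm{g}^t_0,\dots,\bm{g}^t_K)$ and $D^{(t)}$ be as defined there. Then for all $t\ge0$, $$\lVert \bm{g}^{t}-\nabla f(\bm{x}^{t})\rVert^2\le K H^2L^2 D^{(t)}.$$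
   Context: Norms of matrices are Frobenius norms, and the norm of the third-order tensor $\nabla\bm{H}_k(\bm{x}_k)$ is its Euclidean (Frobenius) norm; $\nabla_k$ denotes the partial derivative with respect to the $k$-th block of arguments. A contractive compressor is a (possibly random) map $\mathcal{C}$ with $\mathbb{E}\lVert\mathcal{C}(\bm{v})-\bm{v}\rVert^2\le(1-\alpha)\lVert\bm{v}\rVert^2$ for all $\bm{v}$, for some $\alpha\in(0,1]$, with independent randomness at each application. EF-VFL: surrogates are initialized $\bm{G}^0_k=\mathcal{C}(\bm{H}_k(\bm{x}^0_k))$, $k=0,\dots,K$; at each $t$, $\bm{x}^{t+1}=\bm{x}^t-\eta\tilde{\bm{g}}^t$ and $\bm{G}^{t+1}_k=\bm{G}^t_k+\mathcal{C}(\bm{H}_k(\bm{x}^{t+1}_k)-\bm{G}^t_k)$ for $k=0,\dots,K$. The full surrogate gradient has blocks $\bm{g}^t_k=\sum_{i=1}^N\sum_{j=1}^{E_k}[\tilde\nabla^t_k\Phi]_{ij}[\nabla\bm{H}_k(\bm{x}^t_k)]_{ij:}$ where $\tilde\nabla^t_k\Phi=\nabla_k\Phi(\bm{G}^t_0,\dots,\bm{G}^t_{k-1},\bm{H}_k(\bm{x}^t_k),\bm{G}^t_{k+1},\dots,\bm{G}^t_K)$; $\tilde{\bm{g}}^t$ is its mini-batch analogue computed from the same formula with $\Phi$ replaced by the mini-batch objective on a sampled batch $\mathcal{B}^t\subseteq[N]$ of size $B$ and only the corresponding rows of $\bm{H}_k,\bm{G}_k$. The total distortion is $D^{(t)}=\sum_{k=0}^K\lVert\bm{G}^t_k-\bm{H}_k(\bm{x}^t_k)\rVert^2$.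 *)

From HB Require Import structures.
From mathcomp Require Import all_boot all_order all_algebra.
From mathcomp Require Import all_classical all_reals all_analysis.
Set Implicit Arguments. Unset Strict Implicit. Unset Printing Implicit Defensive.
Import Order.TTheory GRing.Theory Num.Theory.
Import numFieldNormedType.Exports.
Local Open Scope ring_scope.

Section EFVFL.
Variable R : realType.

Definition frob (m n : nat) (M : 'M[R]_(m, n)) : R :=
  Num.sqrt (\sum_(i < m) \sum_(j < n) M i j ^+ 2).

Definition grad (m n : nat) (f : 'M[R]_(m, n) -> R) (U : 'M[R]_(m, n))
  : 'M[R]_(m, n) := \matrix_(i, j) ('d f U : 'M[R]_(m, n) -> R^o) (delta_mx i j).

(* Third-order Jacobian tensor of a matrix-valued map H : R^{d} -> R^{N x E}:
   [jac H x] i j is the row vector [nabla H(x)]_{ij:} whose l-th entry is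
   d H_{ij} / d x_l. *)
Definition jac (d N E : nat) (H : 'rV[R]_d -> 'M[R]_(N, E)) (x : 'rV[R]_d)
  : 'I_N -> 'I_E -> 'rV[R]_d :=
  fun i j => \row_l (('d H x : 'rV[R]_d -> 'M[R]_(N, E)) (delta_mx 0 l)) i j.

Definition tensor_norm (d N E : nat) (T : 'I_N -> 'I_E -> 'rV[R]_d) : R :=
  Num.sqrt (\sum_(i < N) \sum_(j < E) \sum_(l < d) (T i j) 0 l ^+ 2).

End EFVFL.

(* By the chain rule, the k-th block of grad f(x) contracts the Jacobian tensor of H_k at
   x_k with the k-th block of grad Phi at (H_0(x_0), ..., H_K(x_K)), and g_k contracts the
   same tensor with the k-th block of grad Phi at the point where only the k-th block is
   exact and the others are the surrogates G_l.  By Cauchy-Schwarz the k-th block of the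
   error is at most H times the difference of these two gradients, by L-smoothness at most
   H L times the distance of the two points, whose square is sum_(l <> k) |G_l - H_l(x_l)|^2.
   Summing over the K + 1 blocks counts each term of D K times. *)

From HB Require Import structures.
From mathcomp Require Import all_boot all_order all_algebra.
From mathcomp Require Import all_classical all_reals all_analysis.
From mathcomp Require Import ring.
Import Order.TTheory GRing.Theory Num.Theory.
Import numFieldNormedType.Exports.
Local Open Scope ring_scope.

Lemma big_Rank {V : nmodType} {p} {q : 'I_p -> nat} (F : 'I_(\sum_(k < p) q k) -> V) :
  \sum_c F c = \sum_(k < p) \sum_(j < q k) F (tagnat.Rank k j).
Proof.
rewrite sig_big_dep /= (reindex _ tagnat.sig_bij_on) /=.
by apply: eq_bigr => c _; rewrite -tagnat.rankE tagnat.sigK.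
Qed.

Lemma mxrow_Rank {T : Type} {p m} {q : 'I_p -> nat} (B : forall k, 'M[T]_(m, q k))
    k i (j : 'I_(q k)) :
  (\mxrow_k B k) i (tagnat.Rank k j) = B k i j.
Proof. by rewrite -[in X in _ = X](mxrowK B k) !mxE. Qed.

Lemma submxrowEmx {R : pzSemiRingType} {m p} {q : 'I_p -> nat} (A : 'M[R]_(m, \sum_k q k)) k :
  submxrow A k = A *m submxrow 1%:M k.
Proof. by rewrite mul_submxrow mulmx1. Qed.

Lemma mxrowEsum {R : pzSemiRingType} {m p} {q : 'I_p -> nat}
    (B : forall k, 'M[R]_(m, q k)) :
  \mxrow_k B k = \sum_k B k *m submxcol 1%:M k.
Proof. by rewrite -mul_mxrow_mxcol submxcolK mulmx1. Qed.

Lemma submxrow_delta_mx {R : pzSemiRingType} {m p} {q : 'I_p -> nat} i k (l : 'I_(q k)) :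
  submxrow (delta_mx i (tagnat.Rank k l) : 'M[R]_(m, \sum_k q k)) k = delta_mx i l.
Proof.
apply/matrixP => r c.
by rewrite !mxE -[_ == tagnat.Rank _ _]val_eqE tagnat.eq_Rank eqxx val_eqE.
Qed.

Lemma submxrow_delta_mx_neq {R : pzSemiRingType} {m p} {q : 'I_p -> nat} i k k'
    (l : 'I_(q k)) :
  k' != k -> submxrow (delta_mx i (tagnat.Rank k l) : 'M[R]_(m, \sum_k q k)) k' = 0.
Proof.
move=> /negbTE nkk'; apply/matrixP => r c.
by rewrite !mxE -[_ == tagnat.Rank _ _]val_eqE tagnat.eq_Rank nkk' andbF.
Qed.

(* The block row (G_0, ..., G_(k-1), B_k, G_(k+1), ..., G_K), written additively as
   the point at which EF-VFL evaluates the gradient of Phi for party k. *)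
Definition mxrow_replace {V : zmodType} {p m} {E : 'I_p -> nat}
    (G B : forall l, 'M[V]_(m, E l)) k : 'M[V]_(m, \sum_l E l) :=
  \mxrow_l G l + \mxrow_l (if l == k then B l - G l else 0).

Lemma sum_sum_neq {I : finType} {V : nmodType} (F : I -> V) :
  \sum_(k : I) \sum_(l | l != k) F l = (\sum_l F l) *+ #|I|.-1.
Proof.
rewrite (exchange_big_dep xpredT) //= -sumrMnl; apply: eq_bigr => l _.
rewrite (eq_bigl (predC1 l)) => [|k]; last by rewrite /= eq_sym.
by rewrite sumr_const cardC1.
Qed.

Lemma sqr_sum_mul_le {R : realDomainType} {I : finType} (a b : I -> R) :
  (\sum_i a i * b i) ^+ 2 <= (\sum_i a i ^+ 2) * (\sum_i b i ^+ 2).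
Proof.
have sum_prod (u v : I -> R) : \sum_i \sum_j u i * v j = (\sum_i u i) * (\sum_j v j).
  by rewrite mulr_suml; apply: eq_bigr => i _; rewrite mulr_sumr.
have lagrange : \sum_i \sum_j (a i * b j - a j * b i) ^+ 2 =
    ((\sum_i a i ^+ 2) * (\sum_i b i ^+ 2) - (\sum_i a i * b i) ^+ 2) *+ 2.
  transitivity (\sum_i \sum_j (a i ^+ 2 * b j ^+ 2 + b i ^+ 2 * a j ^+ 2
                             - (a i * b i) * (a j * b j) *+ 2)).
    by apply: eq_bigr => i _; apply: eq_bigr => j _; ring.
  under eq_bigr do rewrite sumrB big_split sumrMnl /=.
  rewrite sumrB big_split sumrMnl /= !sum_prod (mulrC (\sum_i b i ^+ 2)) -expr2.
  ring.
have : 0 <= \sum_i \sum_j (a i * b j - a j * b i) ^+ 2.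
  by do 2!(apply: sumr_ge0 => ? _); exact: sqr_ge0.
by rewrite lagrange pmulrn_lge0 // subr_ge0.
Qed.

Section Frobenius.
Context {R : realType}.

Lemma frob_ge0 {m n} (M : 'M[R]_(m, n)) : 0 <= frob M.
Proof. exact: sqrtr_ge0. Qed.

Lemma sqr_frob {m n} (M : 'M[R]_(m, n)) : frob M ^+ 2 = \sum_i \sum_j M i j ^+ 2.
Proof. by rewrite sqr_sqrtr //; do 2!(apply: sumr_ge0 => ? _); exact: sqr_ge0. Qed.

Lemma sqr_frob_mxrow {p m} {q : 'I_p -> nat} (B : forall k, 'M[R]_(m, q k)) :
  frob (\mxrow_k B k) ^+ 2 = \sum_k frob (B k) ^+ 2.
Proof.
rewrite sqr_frob (eq_bigr _ (fun i _ => big_Rank _)) exchange_big.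
apply: eq_bigr => k _; rewrite sqr_frob; apply: eq_bigr => i _; apply: eq_bigr => j _.
by rewrite mxrow_Rank.
Qed.

Lemma sqr_frob_submxrow_le {p m} {q : 'I_p -> nat} (A : 'M[R]_(m, \sum_k q k)) k :
  frob (submxrow A k) ^+ 2 <= frob A ^+ 2.
Proof.
rewrite -[in leRHS](submxrowK A) sqr_frob_mxrow (bigD1 k) //= lerDl.
by apply: sumr_ge0 => l _; exact: sqr_ge0.
Qed.

Lemma sqr_frob_contract_le {m n d} (A : 'M[R]_(m, n)) (T : 'I_m -> 'I_n -> 'rV[R]_d) :
  frob (\sum_i \sum_j A i j *: T i j) ^+ 2 <= frob A ^+ 2 * tensor_norm T ^+ 2.
Proof.
have -> : tensor_norm T ^+ 2 = \sum_l \sum_i \sum_j T i j 0 l ^+ 2.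
  rewrite sqr_sqrtr; last by do 3!(apply: sumr_ge0 => ? _); exact: sqr_ge0.
  by under eq_bigr do rewrite exchange_big; exact: exchange_big.
rewrite sqr_frob big_ord1 sqr_frob mulr_sumr; apply: ler_sum => l _.
rewrite summxE; under eq_bigr do rewrite summxE; under eq_bigr do under eq_bigr do rewrite mxE.
rewrite !pair_bigA; exact: sqr_sum_mul_le.
Qed.

Lemma sqr_frob_mxrow_replace {p m} {E : 'I_p -> nat} (G B : forall l, 'M[R]_(m, E l)) k :
  frob (mxrow_replace G B k - \mxrow_l B l) ^+ 2 = \sum_(l | l != k) frob (G l - B l) ^+ 2.
Proof.
rewrite /mxrow_replace -mxrowD -mxrowB sqr_frob_mxrow [RHS]big_mkcond.
apply: eq_bigr => l _; case: eqP => [->|_] /=; last by rewrite addr0.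
rewrite addrCA subrr addr0 subrr sqr_frob big1 // => i _.
by rewrite big1 // => j _; rewrite mxE expr0n.
Qed.

End Frobenius.

Section MatrixCalculus.
Context {R : realType}.

Lemma linear_mx_continuous {a b c e} (f : {linear 'M[R]_(a, b) -> 'M[R]_(c, e)}) :
  continuous f.
Proof.
have -> : f = (fun u => \sum_i \sum_j u i j *: f (delta_mx i j)) :> (_ -> _).
  apply: funext => u; rewrite {1}(matrix_sum_delta u) linear_sum.
  by apply: eq_bigr => i _; rewrite linear_sum; apply: eq_bigr => j _; rewrite linearZ.
apply: continuous_big => [|i _]; first exact: add_continuous.
apply: continuous_big => [|j _]; first exact: add_continuous.
by move=> u; apply: continuousZr_tmp; exact: coord_continuous.
Qed.

Lemma diff_sum {V W : normedModType R} {n} (f : 'I_n -> V -> W) x :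
  (forall i, differentiable (f i) x) ->
  'd (\sum_(i < n) f i) x = \sum_(i < n) ('d (f i) x : V -> W) :> (V -> W).
Proof.
move=> df.
suff dsum : is_diff x (\sum_(i < n) f i) (\sum_(i < n) ('d (f i) x : V -> W)).
  exact: diff_val.
apply: (big_ind2 (fun g dg => is_diff x g dg)) => [|g dg h dh ? ?|i _].
- exact: is_diff_cst.
- exact: is_diffD.
- exact: differentiableP.
Qed.

Lemma diff_grad {m n} (Phi : 'M[R]_(m, n) -> R) U W :
  ('d Phi U : 'M[R]_(m, n) -> R^o) W = \sum_i \sum_j W i j * grad Phi U i j.
Proof.
rewrite {1}(matrix_sum_delta W) linear_sum; apply: eq_bigr => i _.
by rewrite linear_sum; apply: eq_bigr => j _; rewrite linearZ mxE.
Qed.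

Lemma grad_comp {a b m n} (M : 'M[R]_(a, b) -> 'M[R]_(m, n)) (Phi : 'M[R]_(m, n) -> R)
    X r s :
  differentiable M X -> differentiable Phi (M X) ->
  grad (Phi \o M) X r s = \sum_i \sum_j ('d M X (delta_mx r s)) i j * grad Phi (M X) i j.
Proof. by move=> dM dPhi; rewrite mxE diff_comp //= diff_grad. Qed.

Lemma is_diff_mulmxr {a b c} (A : 'M[R]_(b, c)) (X : 'M[R]_(a, b)) :
  is_diff X (mulmxr A) (mulmxr A).
Proof.
by apply: DiffDef; [apply: linear_differentiable | apply: diff_lin];
  exact: linear_mx_continuous.
Qed.

End MatrixCalculus.

Section Blockwise.
Context {R : realType} {p m : nat} {d E : 'I_p -> nat}.
Variable H : forall k, 'rV[R]_(d k) -> 'M[R]_(m, E k).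

Definition blockwise (y : 'rV[R]_(\sum_k d k)) : 'M[R]_(m, \sum_k E k) :=
  \mxrow_k H k (submxrow y k).

Variable x : 'rV[R]_(\sum_k d k).
Hypothesis dH : forall k, differentiable (H k) (submxrow x k).

(* Extracting and assembling blocks are multiplications by blocks of the identity,
   hence continuous linear maps. *)
Let block k := mulmxr (submxcol 1%:M k) \o H k \o mulmxr (submxrow 1%:M k).

Let blockwiseE : blockwise = \sum_k block k.
Proof.
apply: funext => y; rewrite fct_sumE /blockwise mxrowEsum.
by apply: eq_bigr => k _; rewrite /block /= -submxrowEmx.
Qed.

Let is_diff_block k : is_diff x (block k)
  (mulmxr (submxcol 1%:M k) \o 'd (H k) (submxrow x k) \o mulmxr (submxrow 1%:M k)).
Proof.
apply: is_diff_comp; first exact: is_diff_mulmxr.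
apply: is_diff_comp; last exact: is_diff_mulmxr.
by rewrite /= -submxrowEmx; exact: differentiableP.
Qed.

Lemma differentiable_blockwise : differentiable blockwise x.
Proof.
by rewrite blockwiseE; apply: differentiable_sum => k; case: (is_diff_block k).
Qed.

Lemma diff_blockwise v :
  'd blockwise x v = \mxrow_k 'd (H k) (submxrow x k) (submxrow v k).
Proof.
rewrite blockwiseE diff_sum => [|k]; last by case: (is_diff_block k).
rewrite fct_sumE mxrowEsum; apply: eq_bigr => k _.
by have [_ ->] := is_diff_block k; rewrite /= -submxrowEmx.
Qed.

Lemma submxrow_grad_blockwise (Phi : 'M[R]_(m, \sum_k E k) -> R) k :
  differentiable Phi (blockwise x) ->
  submxrow (grad (Phi \o blockwise) x) k =
    \sum_i \sum_j submxrow (grad Phi (blockwise x)) k i j *: jac (H k) (submxrow x k) i j.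
Proof.
move=> dPhi; apply/matrixP => r l; rewrite ord1 [LHS]mxE.
rewrite grad_comp //; last exact: differentiable_blockwise.
rewrite summxE; apply: eq_bigr => i _; rewrite summxE diff_blockwise.
rewrite (big_Rank (V := R)) (bigD1 k) //= [X in _ + X]big1 ?addr0 => [|k' nk'k].
  by apply: eq_bigr => j _; rewrite mxrow_Rank submxrow_delta_mx !mxE mulrC.
by apply: big1 => j _; rewrite mxrow_Rank submxrow_delta_mx_neq // linear0 mxE mul0r.
Qed.

End Blockwise.

Section SurrogateGradient.
Context {R : realType} {p m : nat} {d E : 'I_p -> nat}.
Context {H : forall k, 'rV[R]_(d k) -> 'M[R]_(m, E k)} {Phi : 'M[R]_(m, \sum_k E k) -> R}.
Context {L Hb : R}.
Variables (y : 'rV[R]_(\sum_k d k)) (G : forall k, 'M[R]_(m, E k)).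
Hypothesis dH : forall k, differentiable (H k) (submxrow y k).
Hypothesis dPhi : differentiable Phi (blockwise H y).
Hypothesis Phi_smooth : forall U V, frob (grad Phi U - grad Phi V) <= L * frob (U - V).
Hypothesis H_bounded : forall k, tensor_norm (jac (H k) (submxrow y k)) <= Hb.

Lemma sqr_frob_surrogate_grad_error_le k :
  frob (\sum_i \sum_j
           submxrow (grad Phi (mxrow_replace G (fun l => H l (submxrow y l)) k)) k i j
             *: jac (H k) (submxrow y k) i j
        - submxrow (grad (Phi \o blockwise H) y) k) ^+ 2
    <= Hb ^+ 2 * L ^+ 2 * \sum_(l | l != k) frob (G l - H l (submxrow y l)) ^+ 2.
Proof.
set mixed := mxrow_replace _ _ _; set J := jac (H k) (submxrow y k); set U := blockwise H y.
have -> : \sum_i \sum_j submxrow (grad Phi mixed) k i j *: J i j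
          - submxrow (grad (Phi \o blockwise H) y) k
        = \sum_i \sum_j submxrow (grad Phi mixed - grad Phi U) k i j *: J i j.
  rewrite submxrow_grad_blockwise // -sumrB; apply: eq_bigr => i _.
  have entryB (A B : 'M[R]_(m, E k)) j : (A - B) i j = A i j - B i j by rewrite !mxE.
  by rewrite -sumrB; apply: eq_bigr => j _; rewrite submxrowB entryB scalerBl.
have J_le : tensor_norm J ^+ 2 <= Hb ^+ 2.
  have Hb_ge0 : 0 <= Hb := le_trans (sqrtr_ge0 _) (H_bounded k).
  by rewrite lerXn2r ?nnegrE ?sqrtr_ge0.
have grad_le : frob (submxrow (grad Phi mixed - grad Phi U) k) ^+ 2
               <= L ^+ 2 * \sum_(l | l != k) frob (G l - H l (submxrow y l)) ^+ 2.
  apply: le_trans (sqr_frob_submxrow_le _ k) _.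
  rewrite -sqr_frob_mxrow_replace -exprMn lerXn2r ?nnegrE ?frob_ge0 //.
  exact: le_trans (frob_ge0 _) (Phi_smooth _ _).
apply: le_trans (sqr_frob_contract_le _ _) _.
apply: le_trans (ler_pM (sqr_ge0 _) (sqr_ge0 _) grad_le J_le) _.
by rewrite mulrC mulrA.
Qed.

End SurrogateGradient.

Theorem lemma1 (R : realType) (K N : nat) (d Ek : 'I_K.+1 -> nat)
  (H : forall k : 'I_K.+1, 'rV[R]_(d k) -> 'M[R]_(N, Ek k))
  (Phi : 'M[R]_(N, \sum_(k < K.+1) Ek k) -> R)
  (L Hb : R)
  (* EF-VFL data: step size, realized compressor outputs C t k (the compressor
     application to block k at iteration t), realized mini-batch gradients,
     iterates and surrogates *)
  (eta : R)
  (C : nat -> forall k : 'I_K.+1, 'M[R]_(N, Ek k) -> 'M[R]_(N, Ek k))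
  (gtil : nat -> 'rV[R]_(\sum_(k < K.+1) d k))
  (x : nat -> 'rV[R]_(\sum_(k < K.+1) d k))
  (G : nat -> forall k : 'I_K.+1, 'M[R]_(N, Ek k)) :
  (1 <= K)%N -> (1 <= N)%N ->
  (forall k xk, differentiable (H k) xk) ->
  (forall U, differentiable Phi U) ->
  (forall U V, frob (grad Phi U - grad Phi V) <= L * frob (U - V)) ->
  (forall k xk, tensor_norm (jac (H k) xk) <= Hb) ->
  (forall k, G 0%N k = C 0%N k (H k (submxrow (x 0%N) k))) ->
  (forall t, x t.+1 = x t - eta *: gtil t) ->
  (forall t k, G t.+1 k = G t k + C t.+1 k (H k (submxrow (x t.+1) k) - G t k)) ->
  let f := fun y : 'rV[R]_(\sum_(k < K.+1) d k) =>
             Phi (\mxrow_(k < K.+1) H k (submxrow y k)) in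
  (* Phi evaluated at (G_0,...,G_{k-1}, H_k(x_k), G_{k+1},...,G_K) *)
  let mixed := fun t (k : 'I_K.+1) =>
       \mxrow_(l < K.+1) G t l
     + \mxrow_(l < K.+1) (if l == k then H l (submxrow (x t) l) - G t l else 0) in
  let g := fun t (k : 'I_K.+1) =>
       \sum_(i < N) \sum_(j < Ek k)
          (submxrow (grad Phi (mixed t k)) k) i j *: jac (H k) (submxrow (x t) k) i j in
  let D := fun t => \sum_(k < K.+1) frob (G t k - H k (submxrow (x t) k)) ^+ 2 in
  forall t : nat,
    frob (\mxrow_(k < K.+1) g t k - grad f (x t)) ^+ 2
      <= K%:R * Hb ^+ 2 * L ^+ 2 * D t.
Proof.
move=> _ _ dH dPhi Phi_smooth H_bounded _ _ _ f mixed g D t.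
have block_le k := sqr_frob_surrogate_grad_error_le (x t) (G t)
  (fun k => dH k _) (dPhi _) Phi_smooth (fun k => H_bounded k _) k.
rewrite -[grad f (x t)]submxrowK -mxrowB sqr_frob_mxrow.
apply: le_trans (ler_sum _ (fun k _ => block_le k)) _.
rewrite -mulr_sumr sum_sum_neq card_ord /=.
suff -> : K%:R * Hb ^+ 2 * L ^+ 2 * D t = Hb ^+ 2 * L ^+ 2 * (D t *+ K) by [].
by ring.
Qed.
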